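(* Let $\phi:\mathbb{R}^{n\times n}\to\mathbb{R}$ be differentiable and $L$-gradient Lipschitz, and let $M^\star=\arg\min\phi$ satisfy $M^\star\succeq0$. Let $f(X)=\phi(XX^T)$. For $X\in\mathbb{R}^{n\times r}$ and $\eta\ge0$ with $X^TX+\eta I$ positive definite, the search direction $V=\nabla f(X)(X^TX+\eta I)^{-1}$ satisfies \[ \|V\|_{X,\eta}=\|\nabla f(X)\|_{X,\eta}^*\le2L\|XX^T-M^\star\|_F. \]
   Context: $\phi$ is $L$-gradient Lipschitz if $\|\nabla\phi(M+E)-\nabla\phi(M)\|_F\le L\|E\|_F$ for all $M,E$. Local norm $\|U\|_{X,\eta}=\|U(X^TX+\eta I)^{1/2}\|_F$ and dual local norm $\|U\|_{X,\eta}^*=\|U(X^TX+\eta I)^{-1/2}\|_F$. *)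

From HB Require Import structures.
From mathcomp Require Import all_boot all_order all_algebra.
From mathcomp Require Import all_classical all_reals all_analysis.
Set Implicit Arguments. Unset Strict Implicit. Unset Printing Implicit Defensive.
Import Order.TTheory GRing.Theory Num.Theory.
Import numFieldNormedType.Exports.
Local Open Scope ring_scope.

Definition frob (R : realType) (m k : nat) (A : 'M[R]_(m, k)) : R :=
  Num.sqrt (\sum_(i < m) \sum_(j < k) A i j ^+ 2).

(* Gradient w.r.t. the Frobenius (trace) inner product: the matrix of
   partial derivatives, (grad g M) i j = D g(M)[E_ij]. *)
Definition grad (R : realType) (m k : nat) (g : 'M[R]_(m, k) -> R)
  (M : 'M[R]_(m, k)) : 'M[R]_(m, k) :=
  \matrix_(i < m, j < k) ('d g M (delta_mx i j : 'M[R]_(m, k)) : R).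

Definition grad_lipschitz (R : realType) (m : nat) (g : 'M[R]_m -> R) (L : R) :=
  forall M E : 'M[R]_m, frob (grad g (M + E) - grad g M) <= L * frob E.

Definition psd (R : realType) (m : nat) (A : 'M[R]_m) :=
  A^T = A /\ forall x : 'cV[R]_m, 0 <= (x^T *m A *m x) 0 0.

Definition posdef (R : realType) (m : nat) (A : 'M[R]_m) :=
  A^T = A /\ forall x : 'cV[R]_m, x != 0 -> 0 < (x^T *m A *m x) 0 0.

(* Local norm ||U||_{X,eta} = ||U S||_F and dual ||U||^*_{X,eta} = ||U S^{-1}||_F,
   where S = (X^T X + eta I)^{1/2} is the PSD square root (passed explicitly). *)
Definition locnorm (R : realType) (m k : nat) (S : 'M[R]_k) (U : 'M[R]_(m, k)) : R :=
  frob (U *m S).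
Definition duallocnorm (R : realType) (m k : nat) (S : 'M[R]_k) (U : 'M[R]_(m, k)) : R :=
  frob (U *m invmx S).

From HB Require Import structures.
From mathcomp Require Import all_boot all_order all_algebra.
From mathcomp Require Import all_classical all_reals all_analysis.
From mathcomp Require Import ring lra.
Set Implicit Arguments.
Unset Strict Implicit.
Unset Printing Implicit Defensive.

Import Order.TTheory GRing.Theory Num.Theory.
Import numFieldNormedType.Exports.
Local Open Scope ring_scope.

(* The gradient of f(Y) = phi(Y Y^T) at X is (G + G^T) X with G the gradient
   of phi at X X^T, and V S = grad f(X) S^-2 S = grad f(X) S^-1.  The matrix
   B = X S^-1 satisfies B^T B + eta S^-2 = S^-1 (X^T X + eta I) S^-1 = I, so
   right multiplication by B does not increase the Frobenius norm; hence
   ||grad f(X) S^-1||_F <= ||G + G^T||_F <= 2 ||G||_F.  Finally the gradient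
   of phi vanishes at its minimiser M*, and the Lipschitz bound between M* and
   X X^T gives ||G||_F <= L ||X X^T - M*||_F. *)

Section Frobenius.
Context {R : realType}.

Lemma mxtrace_tr_mulE m k (A B : 'M[R]_(m, k)) :
  \tr (A^T *m B) = \sum_i \sum_j A i j * B i j.
Proof.
rewrite /mxtrace exchange_big; apply: eq_bigr => j _; rewrite mxE.
by apply: eq_bigr => i _; rewrite mxE.
Qed.

Lemma mxtrace_tr_mulC m k (A B : 'M[R]_(m, k)) : \tr (B^T *m A) = \tr (A^T *m B).
Proof. by rewrite -mxtrace_tr trmx_mul trmxK. Qed.

Lemma mxtrace_mul_delta m k (A : 'M[R]_(m, k)) (i : 'I_k) (j : 'I_m) :
  \tr (A *m delta_mx i j) = A j i.
Proof.
rewrite /mxtrace (bigD1 j) //= big1 ?addr0 => [|l /negbTE ljF].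
  rewrite mxE (bigD1 i) //= big1 ?addr0 => [|l /negbTE liF].
    by rewrite mxE !eqxx mulr1.
  by rewrite mxE liF mulr0.
by rewrite mxE big1 // => l' _; rewrite mxE ljF andbF mulr0.
Qed.

Lemma frob_sqr m k (A : 'M[R]_(m, k)) : frob A ^+ 2 = \tr (A^T *m A).
Proof.
rewrite mxtrace_tr_mulE sqr_sqrtr; last first.
  by do 2![apply: sumr_ge0 => ? _]; exact: sqr_ge0.
by apply: eq_bigr => i _; apply: eq_bigr => j _; rewrite expr2.
Qed.

Lemma frob_ge0 m k (A : 'M[R]_(m, k)) : 0 <= frob A.
Proof. exact: sqrtr_ge0. Qed.

Lemma frob_trmx m k (A : 'M[R]_(m, k)) : frob A^T = frob A.
Proof.
apply/eqP; rewrite -(eqrXn2 (n := 2)) ?frob_ge0 //.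
by rewrite !frob_sqr trmxK mxtrace_mulC.
Qed.

Lemma frob_sqrD m k (A B : 'M[R]_(m, k)) :
  frob (A + B) ^+ 2 = frob A ^+ 2 + 2 * \tr (A^T *m B) + frob B ^+ 2.
Proof.
rewrite !frob_sqr [(A + B)^T]linearD /= mulmxDl !mulmxDr !mxtraceD mxtrace_tr_mulC.
ring.
Qed.

Lemma frob_sqrB m k (A B : 'M[R]_(m, k)) :
  frob (A - B) ^+ 2 = frob A ^+ 2 - 2 * \tr (A^T *m B) + frob B ^+ 2.
Proof.
rewrite frob_sqrD mulmxN linearN /= mulrN; congr (_ + _).
by rewrite !frob_sqr [(- B)^T]linearN /= mulNmx mulmxN opprK.
Qed.

Lemma frob_add_trmx_le m (A : 'M[R]_m) : frob (A + A^T) <= 2 * frob A.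
Proof.
rewrite -ler_sqr ?nnegrE ?mulr_ge0 ?frob_ge0 // exprMn frob_sqrD frob_trmx.
have := sqr_ge0 (frob (A - A^T)); rewrite frob_sqrB frob_trmx.
lra.
Qed.

Lemma frob_mul_contraction m k p q (A : 'M[R]_(m, k)) (B : 'M[R]_(k, p))
    (D : 'M[R]_(q, p)) :
  B^T *m B + D^T *m D = 1%:M -> frob (A *m B) <= frob A.
Proof.
(* Expand 0 <= ||A - A B B^T||^2 and use ||A B B^T|| <= ||A B||. *)
move=> BD1.
have split_sqr (C : 'M[R]_(m, p)) :
    frob (C *m B^T) ^+ 2 + frob (C *m D^T) ^+ 2 = frob C ^+ 2.
  rewrite !frob_sqr !trmx_mul !trmxK !mulmxA mxtrace_mulC [X in _ + X]mxtrace_mulC.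
  rewrite !mulmxA -[B^T *m B *m _ *m _]mulmxA -[D^T *m D *m _ *m _]mulmxA.
  by rewrite -mxtraceD -mulmxDl BD1 mul1mx.
have cross : \tr (A^T *m (A *m B *m B^T)) = frob (A *m B) ^+ 2.
  by rewrite frob_sqr mxtrace_mulC -[_ *m A^T]mulmxA -trmx_mul mxtrace_mulC.
rewrite -ler_sqr ?nnegrE ?frob_ge0 //.
have := sqr_ge0 (frob (A - A *m B *m B^T)); rewrite frob_sqrB cross.
have := split_sqr (A *m B).
have := sqr_ge0 (frob (A *m B *m D^T)).
lra.
Qed.

End Frobenius.

Section MxNorm.
Context {R : realType}.

Lemma mx_norm_entry_le m k (A : 'M[R]_(m, k)) i j : `|A i j| <= `|A|.
Proof.
rewrite [leRHS]mx_normrE.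
exact: (le_bigmax _ (fun ij : 'I_m * 'I_k => `|A ij.1 ij.2|) (i, j)).
Qed.

Lemma mx_norm_le m k (A : 'M[R]_(m, k)) c :
  0 <= c -> (forall i j, `|A i j| <= c) -> `|A| <= c.
Proof. by move=> c0 Ac; rewrite [leLHS]mx_normrE; apply: bigmax_le => // -[i j] _. Qed.

Lemma mx_norm_trmx m k (A : 'M[R]_(m, k)) : `|A^T| = `|A|.
Proof.
suff le_tr p q (B : 'M[R]_(p, q)) : `|B^T| <= `|B|.
  by apply/le_anti/andP; split; [|rewrite -{1}[A]trmxK]; exact: le_tr.
by apply: mx_norm_le => // i j; rewrite mxE mx_norm_entry_le.
Qed.

Lemma mx_norm_mul_le m k p (A : 'M[R]_(m, k)) (B : 'M[R]_(k, p)) :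
  `|A *m B| <= k%:R * (`|A| * `|B|).
Proof.
apply: mx_norm_le => [|i j]; first by rewrite mulr_ge0 ?mulr_ge0.
rewrite mxE (le_trans (ler_norm_sum _ _ _)) // mulr_natl.
rewrite -[X in _ *+ X](card_ord k) -sumr_const; apply: ler_sum => l _; rewrite normrM.
by apply: ler_pM => //; exact: mx_norm_entry_le.
Qed.

End MxNorm.

Section DiffMulmxTrmx.
Context {R : realType} {n r : nat}.
Implicit Types X H : 'M[R]_(n, r).

Definition dmulmx_trmx X H : 'M[R]_n := H *m X^T + X *m H^T.

Lemma dmulmx_trmx_is_linear X : linear (dmulmx_trmx X).
Proof.
move=> a H K; rewrite /dmulmx_trmx linearP /= mulmxDl mulmxDr.
by rewrite -scalemxAl -scalemxAr scalerDr addrACA.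
Qed.

HB.instance Definition _ X := GRing.isLinear.Build R _ _ _ (dmulmx_trmx X)
  (dmulmx_trmx_is_linear X).

Lemma mulmx_trmx_shift X :
  (fun Y => Y *m Y^T) \o shift X =
  cst (X *m X^T) + dmulmx_trmx X + (fun H => H *m H^T).
Proof.
apply/funext => H /=; rewrite /dmulmx_trmx linearD /= mulmxDl !mulmxDr.
by rewrite [X *m H^T + _]addrC addrACA [RHS]addrC -addrA.
Qed.

Lemma dmulmx_trmx_continuous X : continuous (dmulmx_trmx X).
Proof.
apply: bounded_linear_continuous; apply/linear_boundedP.
near=> c => H; rewrite (le_trans (ler_normD _ _)) //.
rewrite (le_trans (lerD (mx_norm_mul_le _ _) (mx_norm_mul_le _ _))) //.
by rewrite !mx_norm_trmx [`|H| * _]mulrC !mulrA -mulrDl ler_wpM2r.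
Unshelve. all: by end_near.
Qed.

Lemma mulmx_trmx_littleo : (fun H => H *m H^T) =o_ (0 : 'M[R]_(n, r)) id.
Proof.
apply/eqoP => e e0; near=> H; rewrite (le_trans (mx_norm_mul_le _ _)) //.
rewrite mx_norm_trmx mulrA ler_wpM2r //.
have r1_gt0 : 0 < r%:R + 1 :> R by rewrite ltr_wpDl.
have : `|H| <= e / (r%:R + 1).
  by near: H; rewrite !near_simpl; apply: nbhs0_le; rewrite divr_gt0.
rewrite ler_pdivlMr // => /(le_trans _); apply.
by rewrite [leRHS]mulrC ler_wpM2r // lerDl.
Unshelve. all: by end_near.
Qed.

Lemma mulmx_trmx_shift_eqo X :
  (fun Y => Y *m Y^T) \o shift X =
  cst (X *m X^T) + dmulmx_trmx X +o_ (0 : 'M[R]_(n, r)) id.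
Proof. by apply/eqaddoE; rewrite mulmx_trmx_shift {1}mulmx_trmx_littleo. Qed.

Lemma diff_mulmx_trmx X :
  'd (fun Y : 'M[R]_(n, r) => Y *m Y^T) X = dmulmx_trmx X :> (_ -> _).
Proof.
exact: diff_unique (@dmulmx_trmx_continuous X) (mulmx_trmx_shift_eqo X).
Qed.

Lemma differentiable_mulmx_trmx X :
  differentiable (fun Y : 'M[R]_(n, r) => Y *m Y^T) X.
Proof.
apply/diff_locallyP; rewrite diff_mulmx_trmx; split.
  exact: dmulmx_trmx_continuous.
exact: mulmx_trmx_shift_eqo.
Qed.

End DiffMulmxTrmx.

Section Gradient.
Context {R : realType}.

Lemma diff_grad m k (g : 'M[R]_(m, k) -> R) M E :
  'd g M E = \tr ((grad g M)^T *m E).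
Proof.
rewrite mxtrace_tr_mulE {1}(matrix_sum_delta E) linear_sum.
apply: eq_bigr => i _; rewrite linear_sum; apply: eq_bigr => j _.
by rewrite linearZ /= mxE mulrC.
Qed.

Lemma grad_mulmx_trmx n r (phi : 'M[R]_n -> R) (X : 'M[R]_(n, r)) :
  differentiable phi (X *m X^T) ->
  grad (fun Y => phi (Y *m Y^T)) X =
    (grad phi (X *m X^T) + (grad phi (X *m X^T))^T) *m X.
Proof.
move=> dphi; set G := grad phi _; apply/matrixP => i j; rewrite mxE.
rewrite -[fun Y => _]/(phi \o fun Y => Y *m Y^T).
rewrite diff_comp //=; last exact: differentiable_mulmx_trmx.
rewrite [X in 'd phi _ X](_ : _ = dmulmx_trmx X (delta_mx i j)) ?diff_grad; last first.
  by rewrite -diff_mulmx_trmx.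
rewrite /dmulmx_trmx mulmxDr mxtraceD !mulmxA mxtrace_mulC mulmxA trmx_delta.
rewrite !mxtrace_mul_delta -/G.
by rewrite -trmx_mul mulmxDl !mxE.
Qed.

Lemma diff_eq0_at_min (V : normedModType R) (f : V -> R) (x v : V) :
  (forall y, differentiable f y) -> (forall y, f x <= f y) -> 'd f x v = 0.
Proof.
move=> df fmin; pose line : R -> V := ( *:%R^~ v) + cst x.
have lineE t : line t = t *: v + x by [].
have dline t : 'd line t = ( *:%R^~ v) :> (_ -> _) by rewrite diff_val addr0.
have dg t : differentiable (f \o line) t by exact: differentiable_comp.
have : is_derive (0 : R) (1 : R) (f \o line) 0.
  apply: (@derive1_at_min _ _ (-1) 1 0).
  - lra.
  - by move=> t _; exact: diff_derivable.
  - by rewrite in_itv /= ltrN10 ltr01.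
  - by move=> t _; rewrite /= !lineE scale0r add0r.
case=> _; rewrite deriveE // diff_comp //= dline /= scale1r.
by rewrite lineE scale0r add0r.
Qed.

Lemma grad_eq0_at_min m k (g : 'M[R]_(m, k) -> R) M :
  (forall Y, differentiable g Y) -> (forall Y, g M <= g Y) -> grad g M = 0.
Proof. by move=> dg gmin; apply/matrixP => i j; rewrite !mxE diff_eq0_at_min. Qed.

Lemma frob_grad_le_at_min m (phi : 'M[R]_m -> R) L Mstar M :
  (forall Y, differentiable phi Y) -> grad_lipschitz phi L ->
  (forall Y, phi Mstar <= phi Y) -> frob (grad phi M) <= L * frob (M - Mstar).
Proof.
move=> dphi Lphi phimin; have := Lphi Mstar (M - Mstar).
by rewrite (addrC Mstar) subrK (grad_eq0_at_min dphi phimin) subr0.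
Qed.

End Gradient.

Section Preconditioner.
Context {R : realType}.

Lemma posdef_unitmx m (H : 'M[R]_m) : posdef H -> H \in unitmx.
Proof.
case=> _ Hpos; rewrite unitmxE unitfE; apply/negP => /det0P[v v0 vH].
have := Hpos v^T; rewrite trmx_eq0 trmxK vH mul0mx mxE ltxx.
by move/(_ v0).
Qed.

Lemma frob_mul_invmx_sqrt_le m n r (A : 'M[R]_(m, n)) (X : 'M[R]_(n, r))
    (S : 'M[R]_r) (eta : R) :
  0 <= eta -> S^T = S -> S \in unitmx -> S *m S = X^T *m X + eta%:M ->
  frob (A *m X *m invmx S) <= frob A.
Proof.
move=> eta0 ST Su SS; set P := invmx S.
have PT : P^T = P by rewrite /P trmx_inv ST.
rewrite -mulmxA; apply: (frob_mul_contraction A (D := Num.sqrt eta *: P)).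
rewrite trmx_mul linearZ [(_ *: P)^T]linearZ /= PT -scalemxAl scalerA -expr2.
rewrite sqr_sqrtr // scalemxAl -mul_mx_scalar !mulmxA -mulmxDl.
by rewrite -[P *m _ *m X]mulmxA -mulmxDr -SS mulmxA mulVmx // mul1mx mulmxV.
Qed.

Lemma locnorm_mul_invmx_sqr m k (S : 'M[R]_k) (U : 'M[R]_(m, k)) :
  S \in unitmx -> locnorm S (U *m invmx (S *m S)) = duallocnorm S U.
Proof.
move=> Su; rewrite /locnorm /duallocnorm -mulmxA; congr (frob (U *m _)).
rewrite -[LHS](mulmxK Su) -[_ *m S *m S]mulmxA mulVmx ?mul1mx //.
by rewrite unitmx_mul Su.
Qed.

End Preconditioner.

Theorem lemma23 (R : realType) (n r : nat) (phi : 'M[R]_n -> R) (L : R)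
  (Mstar : 'M[R]_n) (X : 'M[R]_(n, r)) (eta : R) (S : 'M[R]_r) :
  (forall M : 'M[R]_n, differentiable phi M) ->
  grad_lipschitz phi L ->
  (forall M : 'M[R]_n, phi Mstar <= phi M) ->
  psd Mstar ->
  0 <= eta ->
  posdef (X^T *m X + eta%:M) ->
  psd S -> S *m S = X^T *m X + eta%:M ->
  let f := fun Y : 'M[R]_(n, r) => phi (Y *m Y^T) in
  let V := grad f X *m invmx (X^T *m X + eta%:M) in
  locnorm S V = duallocnorm S (grad f X) /\
  duallocnorm S (grad f X) <= 2 * L * frob (X *m X^T - Mstar).
Proof.
move=> dphi Lphi phimin _ eta0 Hpd [ST _] SS f V.
have Su : S \in unitmx.
  by have := posdef_unitmx Hpd; rewrite -SS unitmx_mul => /andP[].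
set G := grad phi (X *m X^T).
have gradf : grad f X = (G + G^T) *m X by exact: grad_mulmx_trmx.
split; first by rewrite /V -SS locnorm_mul_invmx_sqr.
rewrite /duallocnorm gradf (le_trans (frob_mul_invmx_sqrt_le _ eta0 ST Su SS)) //.
rewrite (le_trans (frob_add_trmx_le G)) // -mulrA ler_wpM2l //.
exact: frob_grad_le_at_min.
Qed.
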